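(* (1) There is a one-to-one correspondence between finite positive integral frieze patterns of width $2n$ with principal growth coefficient $0$ and positive integral friezes on $P_n^\star$ where $\star$ has order $2$. (2) There is a one-to-one correspondence between finite positive integral frieze patterns of width $3n$ with principal growth coefficient $1$ and positive integral friezes on $P_n^\star$ where $\star$ has order $3$.
   Context: A finite positive integral frieze pattern of width $N$ is a function $F$ on $\{0\le j-i\le N\}$ with $F(i,i)=F(i,i+N)=0$, $F(i,i+1)=F(i,i+N-1)=1$, $F(i,j)F(i+1,j+1)-F(i+1,j)F(i,j+1)=1$ whenever defined, and positive integer entries for $0<j-i<N$. With quiddity $a_i=F(i-1,i+1)$, extend $F$ to all $j\ge i$ by $F(i,i)=0$, $F(i,i+1)=1$, $F(i,j+1)=a_jF(i,j)-F(i,j-1)$ (the tame extension); if $p$ is the minimal period of $(a_i)$, the principal growth coefficient is $F(i,i+p+1)-F(i+1,i+p)$, independent of $i$. Let $\lambda_p=2\cos(\pi/p)$. $P_n^\star$ is a polygon with vertices $v_0,\ldots,v_{n-1}$ and an interior orbifold point $\star$ of order $p$ (the quotient of $P_{pn}$ by rotation through $2\pi/p$). Its arcs are standard arcs $(v_i,v_j)$, $i\ne j$, from $v_i$ to $v_j$ with $v_{i+1},\ldots,v_{j-1}$ on the side not containing $\star$ (boundary segments when $j=i+1$), and pending arcs $(v_i,v_i)$, loops at $v_i$ cutting out a monogon containing $\star$. A frieze on $P_n^\star$ is a function $f$ from arcs to an integral domain with $f=1$ on boundary segments and respecting skein relations: for crossing arcs $\tau,\tau'$, $f(\tau)f(\tau')=f(\Gamma^+)+f(\Gamma^-)$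 where $\Gamma^\pm$ are obtained by the two smoothings of a crossing, $f$ multiplicative on multicurves, self-crossings smoothed recursively, contractible closed curves valued $-2$ and closed curves around $\star$ valued $\lambda_p$ (so $f(v_i,v_i)f(v_j,v_j)=f(v_i,v_j)^2+\lambda_pf(v_i,v_j)f(v_j,v_i)+f(v_j,v_i)^2$ for distinct pending arcs). It is positive integral if all its values are positive integers. *)

From Stdlib Require Import Rdefinitions Rtrigo_def Rtrigo1.
From HB Require Import structures.
From mathcomp Require Import all_boot all_order all_algebra.
From mathcomp Require Import Rstruct.
Set Implicit Arguments.
Unset Strict Implicit.
Unset Printing Implicit Defensive.
Import Order.TTheory GRing.Theory Num.Theory.
Local Open Scope ring_scope.

(* ---------- Finite positive integral frieze patterns of width N ----------
   F i j is the entry F(i,j); only pairs with 0 <= j - i <= N carry data,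
   and F is normalised to be 0 outside that domain (so that two patterns
   are equal iff they agree on the domain). *)
Definition is_frieze_pattern (N : nat) (F : int -> int -> int) : Prop :=
  [/\ forall i j : int, ~~ ((0 <= j - i) && (j - i <= N%:Z)) -> F i j = 0,
      (forall i : int, F i i = 0 /\ F i (i + N%:Z) = 0),
      (forall i : int, F i (i + 1) = 1 /\ F i (i + N%:Z - 1) = 1),
      (forall i j : int, 1 <= j - i <= N%:Z - 1 ->
          F i j * F (i + 1) (j + 1) - F (i + 1) j * F i (j + 1) = 1)
    & (forall i j : int, 0 < j - i < N%:Z -> 0 < F i j)].

Definition quid (F : int -> int -> int) (i : int) : int := F (i - 1) (i + 1).

(* tame_pair a i k = (E(i,i+k), E(i,i+k+1)) for the tame extension
   E(i,i) = 0, E(i,i+1) = 1, E(i,j+1) = a_j E(i,j) - E(i,j-1). *)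
Fixpoint tame_pair (a : int -> int) (i : int) (k : nat) : int * int :=
  match k with
  | 0%N => (0, 1)
  | k'.+1 => let xy := tame_pair a i k' in
             (xy.2, a (i + Posz k'.+1) * xy.2 - xy.1)
  end.

Definition tame (F : int -> int -> int) (i : int) (k : nat) : int :=
  (tame_pair (quid F) i k).1.

Definition is_period (a : int -> int) (q : nat) : Prop :=
  forall i : int, a (i + q%:Z) = a i.

Definition is_min_period (a : int -> int) (p : nat) : Prop :=
  [/\ (0 < p)%N, is_period a p &
      forall q : nat, (0 < q)%N -> is_period a q -> (p <= q)%N].

(* principal growth coefficient: F(0, p+1) - F(1, p) in the tame
   extension, p the minimal period of the quiddity *)
Definition has_growth (F : int -> int -> int) (c : int) : Prop :=
  exists p : nat, is_min_period (quid F) p /\ tame F 0 p.+1 - tame F 1 p.-1 = c.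

(* ---------- Friezes on P_n^star (star of order p) ----------
   An arc is encoded as (i, k) : 'I_n * 'I_n, meaning the arc starting at
   v_i of "length" k+1: for k+1 < n it is the standard arc (v_i, v_{i+k+1})
   (indices mod n), for k = n-1 it is the pending arc (v_i, v_i).
   Boundary segments are the arcs with k = 0.
   In the orbifold cover P_{pn} the arc (i,k) lifts to the chords
   (i + t n, i + t n + k + 1). *)
Definition orb_arc (n : nat) := ('I_n * 'I_n)%type.

Definition lam (p : nat) : R := 2 * cos (PI / p%:R).

Definition arcv (n : nat) (f : orb_arc n -> R) (i L : nat) : R :=
  match (insub (i %% n)%N : option 'I_n), (insub L.-1 : option 'I_n) with
  | Some a, Some b => f (a, b)
  | _, _ => 0
  end.

(* value of the generalized arc lifting to the chord (a, a+L) of P_{pn},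
   1 <= L < 2n.  For n < L the curve has one self-crossing; smoothing it
   gives the arc (a, a+L-n) together with a loop around star (value lam p)
   plus the arc from v_(a+L-n) of length 2n-L. *)
Definition genv (p n : nat) (f : orb_arc n -> R) (a L : nat) : R :=
  if (L <= n)%N then arcv f a L
  else lam p * arcv f a (L - n) + arcv f (a + L - n) (2 * n - L).

(* skein relations: every crossing of two arcs is a crossing of lifted
   chords (a, a+d), (b, b+e) in P_{pn}, b = a + s, with
   a < b < a+d < b+e < a+pn; smoothing yields (a,b),(a+d,b+e) and
   (b,a+d),(a,b+e). *)
Definition skein (p n : nat) (f : orb_arc n -> R) : Prop :=
  forall (t u : orb_arc n) (s : nat),
    let i := nat_of_ord t.1 in
    let d := (nat_of_ord t.2).+1 in
    let e := (nat_of_ord u.2).+1 in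
    ((i + s) %% n)%N = nat_of_ord u.1 ->
    (0 < s < d)%N -> (d < s + e < p * n)%N ->
    f t * f u = genv p f i s * genv p f (i + d) (s + e - d)
              + genv p f (i + s) (d - s) * genv p f i (s + e).

Definition orb_frieze (p n : nat) (f : orb_arc n -> R) : Prop :=
  [/\ forall t : orb_arc n, nat_of_ord t.2 = 0%N -> f t = 1,
      skein p f
    & forall t : orb_arc n, f t \in Num.nat /\ 0 < f t].
Arguments orb_frieze p n f : clear implicits.

(* Both kinds of friezes are restrictions of the tame frieze E_c(i, j) of their
   quiddity c, the determinant of two solutions of y(j+1) = c(j) y(j) - y(j-1).
   A frieze pattern of width N is N-antiperiodic, so the minimal period q of c
   divides N = m q, and k |-> E_c(0, k q) obeys a Chebyshev recursion whose
   coefficient t is the monodromy trace of c over q steps (the growth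
   coefficient).  A solution that is positive for 0 < k < m and vanishes at
   k = m exists only for (m, t) = (2, 0) or (3, 1), i.e. t = lambda_m is an
   integer; so growth lambda_p forces q = N / p.  On P_n^star, the skein
   relations of two arcs crossing once (Ptolemy) and of two pending arcs
   determine f from its values on arcs of length 2, i.e. from the quiddity, and
   the pending-arc relation says that the trace over n steps is lambda_p.  Both
   sides are thus in bijection with the n-periodic quiddities of trace lambda_p
   whose tame frieze is positive on chords of length at most n. *)

From Stdlib Require Import Rdefinitions RIneq Rtrigo_def Rtrigo1 Rtrigo_calc.
From Stdlib Require Import ProofIrrelevance FunctionalExtensionality.
From mathcomp Require Import all_boot all_order all_algebra.
From mathcomp Require Import Rstruct.
From mathcomp Require Import ring zify.
Set Implicit Arguments.
Unset Strict Implicit.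
Unset Printing Implicit Defensive.
Import Order.TTheory GRing.Theory Num.Theory.
Local Open Scope ring_scope.

Lemma int_rec2 (P : int -> Prop) : P 0 -> P 1 ->
    (forall j, P (j - 1) -> P j -> P (j + 1)) ->
    (forall j, P j -> P (j + 1) -> P (j - 1)) ->
  forall j, P j.
Proof.
move=> P0 P1 up down.
have pos (k : nat) : P k /\ P k.+1.
  elim: k => [|k [Pk Pk1]]; first by [].
  have e : k.+2%:Z = k.+1%:Z + 1 by rewrite -addn1 PoszD.
  by split=> //; rewrite e; apply: up; rewrite // -addn1 PoszD addrK.
have neg (k : nat) : P (- k%:Z) /\ P (- k%:Z + 1).
  elim: k => [|k [Pk Pk1]]; first by [].
  have e : - k.+1%:Z = - k%:Z - 1 by rewrite -addn1 PoszD opprD.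
  by rewrite e subrK; split=> //; apply: down.
by case=> k; [case: (pos k) | rewrite NegzE; case: (neg k.+1)].
Qed.

Section HillEquation.
Variables (R : comRingType) (c : int -> R).

Definition solves (y : int -> R) := forall j, y (j + 1) = c j * y j - y (j - 1).

Fixpoint sol_fwd (x0 x1 : R) (k : nat) : R :=
  match k with
  | 0%N => x0
  | 1%N => x1
  | (k'.+1 as k1).+1 => c k1 * sol_fwd x0 x1 k1 - sol_fwd x0 x1 k'
  end.

Fixpoint sol_bwd (x0 x1 : R) (k : nat) : R :=
  match k with
  | 0%N => x0
  | 1%N => c 0 * x0 - x1
  | (k'.+1 as k1).+1 => c (- k1%:Z) * sol_bwd x0 x1 k1 - sol_bwd x0 x1 k'
  end.

Definition sol (x0 x1 : R) (j : int) : R :=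
  match j with Posz k => sol_fwd x0 x1 k | Negz k => sol_bwd x0 x1 k.+1 end.

Lemma sol_solves x0 x1 : solves (sol x0 x1).
Proof.
have solN (k : nat) : sol x0 x1 (- k%:Z) = sol_bwd x0 x1 k by case: k.
case=> [[|k]|k]; first by rewrite /=; ring.
- have e1 : k.+1%:Z + 1 = k.+2 by rewrite -[k.+2]addn1 PoszD.
  have e2 : k.+1%:Z - 1 = k by rewrite -addn1 PoszD addrK.
  by rewrite e1 e2.
- have e1 : - k.+1%:Z + 1 = - k%:Z by rewrite -addn1 PoszD opprD subrK.
  have e2 : - k.+1%:Z - 1 = - k.+2%:Z by rewrite -[k.+2]addn1 PoszD opprD.
  by rewrite NegzE e1 e2 !solN /=; ring.
Qed.

Lemma solves_back y : solves y -> forall j, y (j - 1) = c j * y j - y (j + 1).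
Proof. by move=> hy j; rewrite hy; ring. Qed.

Lemma solves_eq0 y : solves y -> y 0 = 0 -> y 1 = 0 -> forall j, y j = 0.
Proof.
move=> hy y0 y1; apply: int_rec2 => // j.
- by move=> ya yb; rewrite hy ya yb; ring.
- by move=> ya yb; rewrite solves_back // ya yb; ring.
Qed.

Definition solX := sol 0 1.
Definition solY := sol (-1) 0.

Lemma solX_solves : solves solX. Proof. exact: sol_solves. Qed.
Lemma solY_solves : solves solY. Proof. exact: sol_solves. Qed.

Lemma solvesE y : solves y -> forall j, y j = y 1 * solX j - y 0 * solY j.
Proof.
move=> hy j; apply/eqP; rewrite -subr_eq0; apply/eqP; move: j.
apply: solves_eq0 => [j|/=|/=]; last 2 first.
- by rewrite /solX /solY /=; ring.
- by rewrite /solX /solY /=; ring.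
by rewrite hy solX_solves solY_solves; ring.
Qed.

Definition frieze (i j : int) : R := solX i * solY j - solY i * solX j.

Lemma frieze_ii i : frieze i i = 0.
Proof. by rewrite /frieze; ring. Qed.

Lemma frieze_anti i j : frieze i j = - frieze j i.
Proof. by rewrite /frieze; ring. Qed.

Lemma frieze0 j : frieze 0 j = solX j.
Proof. by rewrite /frieze /solX /solY /=; ring. Qed.

Lemma frieze1 j : frieze 1 j = solY j.
Proof. by rewrite /frieze /solX /solY /=; ring. Qed.

Lemma frieze_solves i : solves (frieze i).
Proof. by move=> j; rewrite /frieze solX_solves solY_solves; ring. Qed.

Lemma frieze_next i : frieze i (i + 1) = 1.
Proof.
move: i; apply: int_rec2.
- by rewrite add0r frieze0.
- by rewrite frieze1 (solY_solves 1) subrr /solY /=; ring.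
- move=> j _ h; rewrite -[RHS]h /frieze (solX_solves (j + 1)) (solY_solves (j + 1)).
  by rewrite addrK; ring.
- by move=> j h _; rewrite -[RHS]h subrK /frieze (solX_solves j) (solY_solves j); ring.
Qed.

Lemma frieze_plucker a b x d :
  frieze a x * frieze b d = frieze a b * frieze x d + frieze a d * frieze b x.
Proof. by rewrite /frieze; ring. Qed.

Lemma frieze_ptolemy a L :
  frieze a (a + L) * frieze (a + 1) (a + L + 1) =
  1 + frieze (a + 1) (a + L) * frieze a (a + L + 1).
Proof. by rewrite frieze_plucker !frieze_next; ring. Qed.

Lemma frieze2 a : frieze a (a + 2) = c (a + 1).
Proof.
have -> : a + 2 = a + 1 + 1 by rewrite -addrA.
by rewrite frieze_solves addrK frieze_next frieze_ii mulr1 subr0.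
Qed.

Lemma solves_frieze y : solves y ->
  forall i u, y u = frieze u (i + 1) * y i + frieze i u * y (i + 1).
Proof.
move=> hy i u; rewrite -[LHS]mul1r -(frieze_next i).
by rewrite (solvesE hy u) (solvesE hy i) (solvesE hy (i + 1)) /frieze; ring.
Qed.

(* Trace of the monodromy of the Hill equation over [q] steps. *)
Definition mtrace (q : nat) : R := solX (q%:Z + 1) - solY q.

Lemma mtraceE q : mtrace q = frieze 0 (q%:Z + 1) - frieze 1 q.
Proof. by rewrite frieze0 frieze1. Qed.

End HillEquation.

Lemma tameE F i k : tame F i k = frieze (quid F) i (i + k%:Z).
Proof.
rewrite /tame; suff -> : tame_pair (quid F) i k =
    (frieze (quid F) i (i + k%:Z), frieze (quid F) i (i + k%:Z + 1)) by [].
elim: k => [|k IH] /=; first by rewrite addr0 frieze_ii frieze_next.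
have e : i + k.+1%:Z = i + k%:Z + 1 by rewrite -addn1 PoszD addrA.
by rewrite IH /= e [frieze _ i (_ + 1 + 1)]frieze_solves addrK.
Qed.

Section Periodic.
Variables (c : int -> int) (q : nat).
Hypothesis c_q : is_period c q.

Lemma solves_shift y : solves c y -> solves c (fun j => y (j + q%:Z)).
Proof. by move=> hy j /=; rewrite -c_q addrAC hy addrAC. Qed.

Lemma solves_shiftE y j : solves c y ->
  y (j + q%:Z) = y (q%:Z + 1) * solX c j - y q%:Z * solY c j.
Proof. by move=> hy; have := solvesE (solves_shift hy) j; rewrite /= add0r (addrC 1). Qed.

Lemma frieze_shift i j : frieze c (i + q%:Z) (j + q%:Z) = frieze c i j.
Proof.
have w := frieze_next c q%:Z; rewrite /frieze in w *.
have [hX hY] := (@solX_solves _ c, @solY_solves _ c).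
rewrite (solves_shiftE i hX) (solves_shiftE j hX) (solves_shiftE i hY) (solves_shiftE j hY).
by rewrite -[RHS]mulr1 -[in RHS]w; ring.
Qed.

Lemma cayley_hamilton y : solves c y ->
  forall j, y (j + q%:Z + q%:Z) = mtrace c q * y (j + q%:Z) - y j.
Proof.
move=> hy j; have w := frieze_next c q%:Z; rewrite /frieze in w.
have [hX hY] := (@solX_solves _ c, @solY_solves _ c).
rewrite (solves_shiftE (j + q%:Z) hy) (solves_shiftE j hy).
rewrite (solves_shiftE j hX) (solves_shiftE j hY).
rewrite (solvesE hy q%:Z) (solvesE hy (q%:Z + 1)) -[y j]mulr1 -[X in y j * X]w.
by rewrite (solvesE hy j) /mtrace; ring.
Qed.

Lemma frieze_cayley a b :
  frieze c a (b + q%:Z) = mtrace c q * frieze c a b + frieze c b (a + q%:Z).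
Proof.
have := cayley_hamilton (frieze_solves c a) (b - q%:Z); rewrite subrK => ->.
by rewrite (frieze_anti _ b) -(frieze_shift a (b - q%:Z)) subrK.
Qed.

End Periodic.

(* The orders p >= 2 for which lambda_p = 2 cos (pi / p) is an integer l. *)
Definition int_lam (p : nat) (l : int) : Prop := (p = 2%N /\ l = 0) \/ (p = 3%N /\ l = 1).

Lemma int_lam_inj p p' l : int_lam p l -> int_lam p' l -> p = p'.
Proof. by case=> -[-> ->] [] [-> //]. Qed.

Lemma int_lam_bounds p l : int_lam p l -> [/\ (2 <= p <= 3)%N, 0 <= l & l != -2].
Proof. by case=> -[-> ->]. Qed.

Lemma IZR_natr (k : nat) : IZR (Z.of_nat k) = k%:R.
Proof. by rewrite -INR_IZR_INZ INRE. Qed.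

Lemma lam2 : lam 2 = 0.
Proof. by rewrite /lam -(IZR_natr 2) cos_PI2 RmultE mulr0. Qed.

Lemma lam3 : lam 3 = 1.
Proof.
rewrite /lam -(IZR_natr 3) cos_PI3 RmultE RdivE (IZR_natr 2).
by rewrite mul1r divff // pnatr_eq0.
Qed.

Lemma int_lamE p l : int_lam p l -> lam p = l%:~R.
Proof. by case=> -[-> ->]; rewrite ?lam2 ?lam3. Qed.

(* [y k = U_(k-1)(t/2) * y 1] with Chebyshev's U, whose first positive zero
   is at [k = m] exactly when [t = 2 cos (pi / m)]. *)
Lemma chebyshev_first_zero (t : int) (y : nat -> int) (m : nat) :
    y 0%N = 0 -> (forall k, y k.+2 = t * y k.+1 - y k) ->
    (forall k, (0 < k < m)%N -> 0 < y k) -> y m = 0 -> (1 < m)%N ->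
  int_lam m t.
Proof.
move=> y0 yS ypos ym m1; have y1 := ypos 1%N m1.
have y2 : y 2 = t * y 1%N by rewrite yS y0 subr0.
have [t_le0 | t_gt0] := lerP t 0.
  have m2 : m = 2%N.
    apply/eqP; rewrite eqn_leq m1 andbT leqNgt; apply/negP => m_gt2.
    by have := ypos 2%N m_gt2; rewrite y2; nia.
  by left; split=> //; move: ym; rewrite m2 y2 => /eqP; rewrite mulf_eq0 (gt_eqF y1) orbF => /eqP.
have [t1 | t_neq1] := eqVneq t 1.
  have y3 : y 3 = 0 by rewrite yS y2 t1 !mul1r subrr.
  right; split=> //; apply/eqP; rewrite eqn_leq; apply/andP; split.
    by rewrite leqNgt; apply/negP => m_gt3; have := ypos 3%N m_gt3; rewrite y3 ltxx.
  rewrite ltnNge; apply/negP => m_le2; have m2 : m = 2%N by lia.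
  by move: ym; rewrite m2 y2 t1 mul1r => y1_0; rewrite y1_0 ltxx in y1.
have t2 : 2 <= t by lia.
have incr k : 0 <= y k /\ y 1%N <= y k.+1 - y k.
  elim: k => [|k [yk_ge0 dk]]; first by rewrite y0 subr0.
  by split; [lia | rewrite yS; nia].
case: m ym m1 {ypos} => // m ym _.
by have [yk dk] := incr m; lia.
Qed.

Lemma period_mul (a : int -> int) q k : is_period a q -> is_period a (k * q)%N.
Proof.
move=> hq; elim: k => [|k IH] i; first by rewrite mul0n addr0.
by rewrite mulSn PoszD addrA IH hq.
Qed.

Lemma period_mulz (a : int -> int) (q : nat) (K : int) :
  is_period a q -> forall j, a (j + K * q%:Z) = a j.
Proof.
move=> hq j; case: K => k; first by rewrite -PoszM period_mul.
by rewrite NegzE mulNr -PoszM -[in RHS](subrK (k.+1 * q)%N%:Z j) period_mul.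
Qed.

Lemma period_mod (a : int -> int) q m : is_period a q -> is_period a m -> is_period a (m %% q)%N.
Proof.
move=> hq hm i; rewrite -[in RHS]hm.
by rewrite {2}(divn_eq m q) addnC PoszD addrA period_mul.
Qed.

Lemma min_period_dvd (a : int -> int) p m : is_min_period a p -> is_period a m -> (p %| m)%N.
Proof.
case=> p_gt0 hp hmin hm; apply/negPn/negP => p_ndvd_m.
have := hmin _ _ (period_mod hp hm); rewrite lt0n => /(_ p_ndvd_m).
by rewrite leqNgt ltn_mod p_gt0.
Qed.

Lemma min_period_exists (a : int -> int) n : (0 < n)%N -> is_period a n ->
  exists p, is_min_period a p.
Proof.
move=> n_gt0 hn.
pose P q := (0 < q)%N && [forall k : 'I_n, a (k%:Z + q%:Z) == a k].
have PP q : (0 < q)%N -> is_period a q -> P q.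
  by move=> q_gt0 hq; rewrite /P q_gt0; apply/forallP => k; rewrite hq.
case: (ex_minnP (ex_intro P n (PP n n_gt0 hn))) => p /andP[p_gt0 /forallP hp] pmin.
exists p; split=> // [i|q q_gt0 hq]; last exact/pmin/PP.
have n_neq0 : n%:Z != 0 by rewrite -lt0n.
have r_ge0 := modz_ge0 i n_neq0; have r_lt := ltz_pmod i (n_gt0 : 0 < n%:Z).
have r_lt' : (`|(i %% n%:Z)%Z| < n)%N by lia.
have shift x : a ((i %/ n%:Z)%Z * n%:Z + x) = a x by rewrite addrC period_mulz.
rewrite {1 2}(divz_eq i n%:Z) -addrA !shift.
by have /eqP := hp (Ordinal r_lt'); rewrite /= gez0_abs.
Qed.

Definition antiperiodic (c : int -> int) (N : int) : Prop :=
  forall i j, frieze c i (j + N) = - frieze c i j.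

Lemma antiperiodicP c N : (forall i, frieze c i (i + N) = 0) ->
  (forall i, frieze c (i + 1) (i + N) = 1) -> antiperiodic c N.
Proof.
move=> h0 h1 i j.
by rewrite (solves_frieze (frieze_solves c i) j) h0 frieze_anti h1; ring.
Qed.

Lemma antiperiodic_period c (N : nat) : antiperiodic c N -> is_period c N.
Proof.
move=> hN j; have := frieze_solves c (j + 1) (j + N%:Z).
rewrite addrAC [j + N%:Z - 1]addrAC !hN frieze_ii (frieze_anti _ (j + 1) j) frieze_next.
by rewrite (solves_back (frieze_solves c (j + 1)) j) frieze_ii (frieze_anti _ (j + 1) j) frieze_next; lia.
Qed.

Lemma antiperiodic_mtrace c (N : nat) : antiperiodic c N -> mtrace c N = -2.
Proof.
move=> hN; rewrite mtraceE.
have -> : frieze c 0 (N%:Z + 1) = -1 by rewrite addrC hN frieze0.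
by rewrite -[N%:Z]add0r hN frieze_anti opprK frieze0.
Qed.

Lemma mtrace_antiperiodic p l c n : int_lam p l -> is_period c n -> mtrace c n = l ->
  antiperiodic c (p * n)%N.
Proof.
move=> hpl hn tr i j; have ch := cayley_hamilton hn (frieze_solves c i); rewrite tr in ch.
case: hpl => -[-> l_val]; rewrite l_val in ch.
  by rewrite mul2n -addnn PoszD addrA ch mul0r sub0r.
have -> : (3 * n)%N%:Z = n%:Z + n%:Z + n%:Z by rewrite -!PoszD; congr Posz; lia.
by rewrite !addrA ch (addrAC j) ch; ring.
Qed.

Lemma frieze_first_zero c (q m : nat) : is_period c q -> (0 < q)%N -> (1 < m)%N ->
    (forall k : nat, (0 < k < m * q)%N -> 0 < frieze c 0 k) ->
    frieze c 0 (m * q)%N = 0 ->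
  int_lam m (mtrace c q).
Proof.
move=> hq q_gt0 m_gt1 hpos hz.
apply: (@chebyshev_first_zero _ (fun k => frieze c 0 (k * q)%N)); rewrite ?mul0n ?frieze_ii //.
- move=> k /=; have -> : (k.+2 * q)%N%:Z = (k * q)%N%:Z + q%:Z + q%:Z by lia.
  by rewrite (cayley_hamilton hq (frieze_solves c 0)) -PoszD -mulSnr.
- by move=> k /andP[k_gt0 k_lt_m]; apply: hpos; rewrite muln_gt0 k_gt0 q_gt0 ltn_pmul2r.
Qed.

Lemma growthE F (p : nat) : (0 < p)%N ->
  tame F 0 p.+1 - tame F 1 p.-1 = mtrace (quid F) p.
Proof.
by case: p => // p _; rewrite !tameE mtraceE; congr (frieze _ _ _ - frieze _ _ _); lia.
Qed.

Lemma has_growthE F l :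
  has_growth F l <-> exists p, is_min_period (quid F) p /\ mtrace (quid F) p = l.
Proof.
split=> -[p [hp <-]]; exists p; split=> //.
  by rewrite growthE //; case: hp.
by rewrite growthE //; case: hp.
Qed.

Section FriezePattern.
Variables (N : nat) (F : int -> int -> int).
Hypothesis F_N : is_frieze_pattern N F.

Lemma frieze_pattern_rec i j : 0 < j - i < N%:Z ->
  F i (j + 1) + F i (j - 1) = quid F j * F i j.
Proof.
case: F_N => _ F_0 F_1 F_det F_pos ji.
have [g gE] : exists g : nat, j - i = g.+1%:Z by exists (absz (j - i - 1)%R); lia.
elim: g i gE ji => [|g IH] i gE ji.
  have -> : j = i + 1 by lia.
  by rewrite addrK (F_0 i).1 addr0 (F_1 i).1 mulr1 /quid addrK -addrA.
have ri := IH (i + 1) ltac:(lia) ltac:(lia).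
have F_pos' := F_pos (i + 1) j ltac:(lia).
apply: (mulfI (lt0r_neq0 F_pos')).
have D1 := F_det i j ltac:(lia).
have D2 := F_det i (j - 1) ltac:(lia); rewrite subrK in D2.
have e : F (i + 1) j * (F i (j + 1) + F i (j - 1)) - F i j * (F (i + 1) (j + 1) + F (i + 1) (j - 1))
  = (F i (j - 1) * F (i + 1) j - F (i + 1) (j - 1) * F i j)
  - (F i j * F (i + 1) (j + 1) - F (i + 1) j * F i (j + 1)) by ring.
by move: e; rewrite D1 D2 subrr ri => /eqP; rewrite subr_eq0 => /eqP ->; ring.
Qed.

Lemma frieze_patternE i j : 0 <= j - i <= N%:Z -> F i j = frieze (quid F) i j.
Proof.
case: F_N => _ F_0 F_1 _ _ ji.
have [k kE] : exists k : nat, j = i + k%:Z by exists (absz (j - i)%R); lia.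
subst j.
elim/ltn_ind: k ji => -[|[|k]] IH kN.
- by rewrite addr0 (F_0 i).1 frieze_ii.
- by rewrite (F_1 i).1 frieze_next.
have e : i + k.+2%:Z = i + k.+1%:Z + 1 by lia.
have jk : i + k.+1%:Z - 1 = i + k%:Z by lia.
rewrite e frieze_solves jk -(IH k.+1) -?(IH k) //; try lia.
by rewrite -frieze_pattern_rec ?jk ?addrK //; lia.
Qed.

Lemma frieze_pattern_width_gt0 : (0 < N)%N.
Proof.
case: F_N => F_out _ F_1 _ _; rewrite lt0n; apply/negP => /eqP N0.
by have := (F_1 0).2; rewrite N0 F_out.
Qed.

Lemma frieze_pattern_antiperiodic : antiperiodic (quid F) N.
Proof.
have N_gt0 := frieze_pattern_width_gt0.
have F_0 := F_N; case: F_0 => _ F_0 F_1 _ _.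
apply: antiperiodicP => i; rewrite -frieze_patternE; try lia.
- exact: (F_0 i).2.
- have -> : i + N%:Z = i + 1 + N%:Z - 1 by rewrite addrAC addrK.
  exact: (F_1 _).2.
Qed.

End FriezePattern.

Definition quiddity (n : nat) (l : int) (c : int -> int) : Prop :=
  [/\ is_period c n, mtrace c n = l & forall i j, 0 < j - i <= n%:Z -> 0 < frieze c i j].

Section Quiddity.
Variables (p n : nat) (l : int) (c : int -> int).
Hypotheses (pl : int_lam p l) (c_nl : quiddity n l c).

Lemma quiddity_antiperiodic : antiperiodic c (p * n)%N.
Proof. by case: c_nl => hn tr _; apply: mtrace_antiperiodic pl hn tr. Qed.

Lemma quiddity_pos i j : 0 < j - i < (p * n)%N%:Z -> 0 < frieze c i j.
Proof.
case: c_nl => hn tr hpos ji; have [/andP[_ p_le3] l_ge0 _] := int_lam_bounds pl.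
have [ji_le_n | n_lt_ji] := lerP (j - i) n%:Z; first by apply: hpos; lia.
have [ji_lt_2n | ji_ge_2n] := ltrP (j - i) (2 * n)%N%:Z.
  rewrite -(subrK n%:Z j) frieze_cayley // tr.
  by apply: ltr_wpDl; [apply/mulr_ge0/ltW/hpos | apply: hpos]; lia.
have pn_le_3n : (p * n <= 3 * n)%N by rewrite leq_mul2r p_le3 orbT.
rewrite -(subrK (p * n)%N%:Z j) quiddity_antiperiodic frieze_anti opprK.
by apply: hpos; lia.
Qed.

End Quiddity.

Definition frieze_pattern_of (N : nat) (c : int -> int) (i j : int) : int :=
  if (0 <= j - i) && (j - i <= N%:Z) then frieze c i j else 0.

Lemma quid_frieze_pattern_of N c : (2 <= N)%N -> quid (frieze_pattern_of N c) = c.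
Proof.
move=> N_ge2; apply: functional_extensionality => i.
rewrite /quid /frieze_pattern_of ifT; last by apply/andP; split; lia.
have -> : i + 1 = i - 1 + 2 by lia.
by rewrite frieze2 subrK.
Qed.

Lemma frieze_pattern_ofK N F : is_frieze_pattern N F -> frieze_pattern_of N (quid F) = F.
Proof.
move=> F_N; apply: functional_extensionality => i; apply: functional_extensionality => j.
rewrite /frieze_pattern_of; case: ifP => [ji | /negbT ji].
  exact/esym/(frieze_patternE F_N).
by case: F_N => F_out _ _ _ _; rewrite F_out.
Qed.

Section FriezePatternQuiddity.
Variables (p n : nat) (l : int).
Hypotheses (pl : int_lam p l) (n_gt0 : (0 < n)%N).

Let p_ge2 : (2 <= p)%N. Proof. by case/int_lam_bounds: pl => /andP[]. Qed.
Let n_lt_pn : (n < p * n)%N. Proof. by rewrite ltn_Pmull. Qed.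

Lemma frieze_pattern_of_quiddity c : quiddity n l c ->
  is_frieze_pattern (p * n) (frieze_pattern_of (p * n) c).
Proof.
move=> c_nl; have anti := quiddity_antiperiodic pl c_nl.
have inside i j : 0 <= j - i <= (p * n)%N%:Z -> frieze_pattern_of (p * n) c i j = frieze c i j.
  by move=> ji; rewrite /frieze_pattern_of ji.
split.
- by move=> i j /negbTE ji; rewrite /frieze_pattern_of ji.
- by move=> i; rewrite !inside ?addrK ?frieze_ii ?anti ?frieze_ii ?oppr0; [|lia..].
- move=> i; rewrite !inside ?frieze_next; [split=> // | lia..].
  rewrite addrAC anti frieze_anti opprK.
  by rewrite -{2}(subrK 1 i) frieze_next.
- move=> i j ji; rewrite !inside; [|lia..].
  by rewrite (frieze_plucker _ i (i + 1)) !frieze_next; ring.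
- by move=> i j ji; rewrite inside; [apply: quiddity_pos pl c_nl _ _ ji | lia].
Qed.

Lemma frieze_pattern_of_growth c : quiddity n l c ->
  has_growth (frieze_pattern_of (p * n) c) l.
Proof.
move=> c_nl; have [hn tr _] := c_nl.
apply/has_growthE; rewrite quid_frieze_pattern_of; last by lia.
have [q q_min] := min_period_exists n_gt0 hn; exists q; split=> //.
have [q_gt0 hq _] := q_min.
have /dvdnP [r n_rq] := min_period_dvd q_min hn.
suff r1 : r = 1%N by rewrite -tr n_rq r1 mul1n.
have r_gt0 : (0 < r)%N by move: n_gt0; rewrite n_rq muln_gt0 => /andP[].
apply/eqP; rewrite eqn_leq r_gt0 andbT leqNgt; apply/negP => r_gt1.
have : int_lam (p * r) (mtrace c q).
  apply: frieze_first_zero => //; first by nia.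
  - move=> k; rewrite -mulnA -n_rq => k_lt.
    by apply: (quiddity_pos pl c_nl); lia.
  - by rewrite -mulnA -n_rq -[_%:Z]add0r (quiddity_antiperiodic pl c_nl) frieze_ii oppr0.
by case/int_lam_bounds => /andP[_]; rewrite leqNgt (leq_mul p_ge2 r_gt1).
Qed.

Lemma quid_quiddity F : is_frieze_pattern (p * n) F -> has_growth F l -> quiddity n l (quid F).
Proof.
move=> F_pn /has_growthE [q [q_min tr]]; have [q_gt0 hq _] := q_min.
have anti := frieze_pattern_antiperiodic F_pn.
have F_E := frieze_patternE F_pn.
have [F_out F_0 _ _ F_pos] := F_pn.
have /dvdnP [m pn_mq] := min_period_dvd q_min (antiperiodic_period anti).
have m_gt1 : (1 < m)%N.
  rewrite ltnNge; apply/negP => m_le1; case: m m_le1 pn_mq => [|[|//]] _ pn_mq.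
    by move: n_lt_pn; rewrite pn_mq.
  have := antiperiodic_mtrace anti; rewrite pn_mq mul1n tr.
  by case/int_lam_bounds: pl => _ _ /eqP.
have mp : m = p.
  apply: int_lam_inj pl; rewrite -tr; apply: frieze_first_zero => //.
  - by move=> k k_lt; rewrite -F_E ?F_pos; lia.
  - by rewrite -pn_mq -F_E; [rewrite -[_%:Z]add0r (F_0 0).2 | lia].
have qn : q = n by apply/eqP; rewrite -(eqn_pmul2l (ltnW p_ge2)) pn_mq mp mulnC.
rewrite -qn; split=> // i j ji.
by rewrite -F_E ?F_pos; lia.
Qed.

End FriezePatternQuiddity.

Lemma frieze_shiftz c (n : nat) (K : int) i j : is_period c n ->
  frieze c (i + K * n%:Z) (j + K * n%:Z) = frieze c i j.
Proof.
move=> hn; case: K => k; first by rewrite -PoszM (frieze_shift (period_mul k hn)).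
rewrite NegzE mulNr -PoszM -(frieze_shift (period_mul k.+1 hn)).
by rewrite !subrK.
Qed.

Lemma frieze_modn c (n : nat) (a : nat) (L : int) : is_period c n ->
  frieze c (a %% n)%N ((a %% n)%N%:Z + L) = frieze c a (a%:Z + L).
Proof.
move=> hn; rewrite -(frieze_shiftz (a %/ n)%N%:Z _ _ hn) -PoszM -addrAC -!PoszD.
by rewrite addnC -divn_eq.
Qed.

Section OrbifoldArcs.
Variables (n : nat) (f : orb_arc n -> R).

Lemma arcvE (x y : 'I_n) (a : nat) : (a %% n)%N = x -> arcv f a y.+1 = f (x, y).
Proof.
move=> ax; rewrite /arcv /=.
have a_lt : (a %% n < n)%N by rewrite ax ltn_ord.
rewrite (insubT (fun k => k < n)%N a_lt) (insubT (fun k => k < n)%N (ltn_ord y)).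
by congr f; congr pair; apply: val_inj.
Qed.

Lemma arcv_modn a b L : a = b %[mod n] -> arcv f a L = arcv f b L.
Proof. by rewrite /arcv => ->. Qed.

Lemma genv_modn p a b L : a = b %[mod n] -> genv p f a L = genv p f b L.
Proof.
move=> ab; rewrite /genv; case: leqP => [_ | n_lt_L]; first exact: arcv_modn.
rewrite (arcv_modn _ ab); congr (_ + _); apply: arcv_modn.
by rewrite -!addnBA 1?ltnW // -modnDml ab modnDml.
Qed.

Lemma arcv1 a : (0 < n)%N -> (forall t : orb_arc n, t.2 = 0%N :> nat -> f t = 1) ->
  arcv f a 1 = 1.
Proof.
move=> n_gt0 hb; have a_lt : (a %% n < n)%N by rewrite ltn_mod.
by rewrite (@arcvE (Ordinal a_lt) (Ordinal n_gt0)) // hb.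
Qed.

Lemma arcv_pos a L : (0 < L <= n)%N -> (forall t, f t \in Num.nat /\ 0 < f t) ->
  arcv f a L \in Num.nat /\ 0 < arcv f a L.
Proof.
case: L => // L /= L_lt hf; have a_lt : (a %% n < n)%N by rewrite ltn_mod; lia.
by rewrite (@arcvE (Ordinal a_lt) (Ordinal L_lt)).
Qed.

Lemma skein_consecutive p a L : skein p f -> (0 < L)%N -> (L < n)%N -> (L.+2 < p * n)%N ->
  arcv f a L.+1 * arcv f a.+1 L.+1 =
  genv p f a 1 * genv p f (a + L.+1) 1 + genv p f a.+1 L * genv p f a L.+2.
Proof.
move=> sk L_gt0 L_lt L2_lt; have n_gt0 : (0 < n)%N by lia.
have a_lt : (a %% n < n)%N by rewrite ltn_mod.
have a1_lt : (a.+1 %% n < n)%N by rewrite ltn_mod.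
have h := sk (Ordinal a_lt, Ordinal L_lt) (Ordinal a1_lt, Ordinal L_lt) 1%N; rewrite /= in h.
rewrite -(@arcvE (Ordinal a_lt) (Ordinal L_lt) a) // in h.
rewrite -(@arcvE (Ordinal a1_lt) (Ordinal L_lt) a.+1) // in h.
have gm k L' : genv p f (a %% n + k) L' = genv p f (a + k) L'.
  by apply: genv_modn; rewrite modnDml.
have g0 L' : genv p f (a %% n) L' = genv p f a L'.
  by apply: genv_modn; rewrite modn_mod.
rewrite h ?gm ?g0 ?addnK ?subn1 ?add1n ?addn1 //; last by lia.
by rewrite -[(a %% n).+1]addn1 modnDml addn1.
Qed.

End OrbifoldArcs.

Definition arcs_tame (n : nat) (f : orb_arc n -> R) (c : int -> int) : Prop :=
  forall a L : nat, (0 < L <= n)%N -> arcv f a L = (frieze c a (a%:Z + L%:Z))%:~R.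

Section TameArcs.
Variables (p n : nat) (l : int) (c : int -> int) (f : orb_arc n -> R).
Hypotheses (pl : int_lam p l) (hn : is_period c n) (tr : mtrace c n = l).
Hypothesis f_c : arcs_tame f c.

Lemma genv_tame a L : (0 < L < 2 * n)%N -> genv p f a L = (frieze c a (a%:Z + L%:Z))%:~R.
Proof.
move=> L_lt; rewrite /genv; case: leqP => [L_le | n_lt_L]; first by apply: f_c; lia.
rewrite !f_c ?(int_lamE pl) -?intrM -?intrD; try lia.
have -> : a%:Z + L%:Z = (a + L - n)%N%:Z + n%:Z by lia.
rewrite (frieze_cayley hn) tr; congr (_ * frieze _ _ _ + frieze _ _ _)%:~R; lia.
Qed.

Lemma skein_tame : skein p f.
Proof.
move=> t u s /= tu /andP[s_gt0 s_lt] /andP[d_lt se_lt].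
have [dn en] := (ltn_ord t.2, ltn_ord u.2).
have ft : f t = arcv f t.1 t.2.+1.
  by rewrite (@arcvE _ _ t.1 t.2) -?surjective_pairing // modn_small.
have fu : f u = arcv f (t.1 + s) u.2.+1 by rewrite (@arcvE _ _ u.1 u.2) -?surjective_pairing.
rewrite ft fu !f_c ?genv_tame -?intrM -?intrD; try lia.
congr (_)%:~R; rewrite (frieze_plucker _ t.1 (t.1 + s)%:Z (t.1 + t.2.+1)%:Z).
rewrite [X in _ + X = _]mulrC.
by congr (frieze _ _ _ * frieze _ _ _ + frieze _ _ _ * frieze _ _ _); lia.
Qed.

End TameArcs.

Definition orb_frieze_of (n : nat) (c : int -> int) : orb_arc n -> R :=
  fun t => (frieze c t.1 (t.1%:Z + t.2.+1%:Z))%:~R.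
Arguments orb_frieze_of n c : clear implicits.

Lemma arcs_tame_orb_frieze_of n c : is_period c n -> arcs_tame (orb_frieze_of n c) c.
Proof.
move=> hn a [|L] // L_lt; have a_lt : (a %% n < n)%N by rewrite ltn_mod; lia.
by rewrite (@arcvE _ _ (Ordinal a_lt) (Ordinal L_lt)) // /orb_frieze_of /= frieze_modn.
Qed.

Lemma orb_frieze_of_quiddity p n l c : int_lam p l -> quiddity n l c -> orb_frieze p n (orb_frieze_of n c).
Proof.
move=> pl c_nl; have [hn tr hpos] := c_nl; split.
- by move=> t t2_0; rewrite /orb_frieze_of t2_0 frieze_next.
- exact: skein_tame pl hn tr (arcs_tame_orb_frieze_of hn).
- move=> t; have t_pos : 0 < frieze c t.1 (t.1%:Z + t.2.+1%:Z) by apply: hpos; have := ltn_ord t.2; lia.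
  by rewrite /orb_frieze_of ltr0z t_pos natrEint intr_int ler0z ltW.
Qed.

Lemma arcs_tame_pos n (f : orb_arc n -> R) c : is_period c n -> arcs_tame f c ->
    (forall t, f t \in Num.nat /\ 0 < f t) ->
  forall i j, 0 < j - i <= n%:Z -> 0 < frieze c i j.
Proof.
move=> hn f_c f_pos i j ji.
have [a aE] : exists a : nat, a%:Z = i + `|i|%:Z * n%:Z by exists (absz (i + `|i|%:Z * n%:Z)%R); nia.
have [L LE] : exists L : nat, L%:Z = j - i by exists (absz (j - i)%R); lia.
have L_ok : (0 < L <= n)%N by lia.
have [_] := arcv_pos a L_ok f_pos; rewrite f_c // ltr0z.
have -> : a%:Z + L%:Z = j + `|i|%:Z * n%:Z by lia.
by rewrite aE frieze_shiftz.
Qed.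

(* For [n = 1] there is no arc of length 2 and the quiddity is forced to be the
   constant [l] by the trace condition. *)
Definition orb_quid (n : nat) (l : int) (f : orb_arc n -> R) (i : int) : int :=
  if (1 < n)%N then Num.floor (arcv f (absz ((i - 1) %% n%:Z)%Z) 2) else l.

Lemma genv_small p n (f : orb_arc n -> R) a L : (L <= n)%N -> genv p f a L = arcv f a L.
Proof. by move=> L_le; rewrite /genv L_le. Qed.

Section OrbQuid.
Variables (p n : nat) (l : int) (f : orb_arc n -> R).
Hypotheses (p_ge2 : (1 < p)%N) (f_orb : orb_frieze p n f).

Lemma arcv_ptolemy a k : (k.+3 <= n)%N ->
  arcv f a k.+2 * arcv f a.+1 k.+2 = 1 + arcv f a.+1 k.+1 * arcv f a k.+3.
Proof.
have [f_bd f_sk _] := f_orb => k_lt.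
by rewrite (skein_consecutive a f_sk) ?genv_small ?arcv1 ?mul1r //; nia.
Qed.

Lemma arcv_pending L : L.+2 = n ->
  arcv f 0 L.+2 * arcv f 1 L.+2 = 1 + arcv f 1 L.+1 * (lam p + arcv f 1 L.+1).
Proof.
have [f_bd f_sk _] := f_orb => nL.
rewrite (skein_consecutive 0 f_sk) //; try nia.
have -> : genv p f 0 L.+3 = lam p * arcv f 0 1 + arcv f 1 L.+1.
  rewrite /genv ifN; last by rewrite -ltnNge -nL.
  have [e1 e2] : (L.+3 - n = 1 /\ 2 * n - L.+3 = L.+1)%N by lia.
  by rewrite add0n e1 e2.
by rewrite !genv_small ?arcv1 ?mul1r ?mulr1 //; lia.
Qed.

Lemma orb_quid_period : is_period (orb_quid l f) n.
Proof. by move=> i; rewrite /orb_quid addrAC modzDr. Qed.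

Lemma arcs_tame_orb_quid : arcs_tame f (orb_quid l f).
Proof.
have [f_bd _ f_pos] := f_orb; set c := orb_quid l f.
pose P a L := arcv f a L = (frieze c a (a%:Z + L%:Z))%:~R.
suff key k : (k < n)%N -> forall a, P a k.+1 /\ ((k.+2 <= n)%N -> P a k.+2).
  by move=> a [|L] // L_le; have [] := key L L_le a.
elim: k => [|k IH] k_lt a.
  split=> [|n_ge2]; first by rewrite /P arcv1 // frieze_next.
  rewrite /P frieze2 /c /orb_quid n_ge2 addrK modz_nat absz_nat.
  rewrite (arcv_modn f 2 (modn_mod a n)) floorK //.
  by have [/intr_nat] := arcv_pos (L := 2) a n_ge2 f_pos.
have [_ P_a2] := IH (ltnW k_lt) a.
split=> [|k3_le]; first exact: P_a2.
have [P_a1' P_a2'] := IH (ltnW k_lt) a.+1.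
have pos : 0 < arcv f a.+1 k.+1 by have [] := arcv_pos (L := k.+1) a.+1 (ltnW k_lt) f_pos.
have := arcv_ptolemy a k3_le; rewrite P_a2 // P_a2' // P_a1'.
have e2 : a.+1%:Z + k.+2%:Z = a%:Z + k.+2%:Z + 1 by lia.
have e1 : a.+1%:Z + k.+1%:Z = a%:Z + k.+2%:Z by lia.
have e0 : a.+1%:Z = a%:Z + 1 by lia.
rewrite P_a1' e1 e0 in pos; rewrite e2 e1 e0.
rewrite /P -intrM frieze_ptolemy intrD mulr1z intrM => /addrI eq.
rewrite -(mulfI (lt0r_neq0 pos) eq).
by congr (frieze _ _ _)%:~R; lia.
Qed.

End OrbQuid.

Section OrbQuidCorrespondence.
Variables (p n : nat) (l : int).
Hypotheses (pl : int_lam p l) (n_gt0 : (0 < n)%N).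

Let p_ge2 : (1 < p)%N. Proof. by case/int_lam_bounds: pl => /andP[]. Qed.

Lemma mtrace_orb_quid f : orb_frieze p n f -> mtrace (orb_quid l f) n = l.
Proof.
move=> f_orb; rewrite mtraceE.
have [n1 | n_ge2] := leqP n 1.
  have -> : n%:Z = 1 by lia.
  by rewrite -[1 + 1]add0r frieze2 frieze_ii subr0 add0r /orb_quid ltnNge n1.
have f_c := arcs_tame_orb_quid l p_ge2 f_orb.
have [f_bd _ f_pos] := f_orb.
have [L nL] : exists L, L.+2 = n by exists n.-2; lia.
have L1_le : (0 < L.+1 <= n)%N by lia.
have [_ x_gt0] := arcv_pos 1 L1_le f_pos.
have := arcv_pending p_ge2 f_orb nL; rewrite !f_c ?(int_lamE pl) in x_gt0 *; try lia.
have [e0 e1 e2] : [/\ 0%N%:Z + L.+2%:Z = n%:Z, 1%N%:Z + L.+2%:Z = n%:Z + 1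
                   & 1%N%:Z + L.+1%:Z = n%:Z] by split; lia.
rewrite e0 e1 e2 ltr0z in x_gt0 *.
have := frieze_ptolemy (orb_quid l f) 0 n%:Z; rewrite !add0r => pt.
rewrite -[X in X = _ -> _]intrM pt intrD mulr1z -intrD -intrM => /addrI /eqP.
by rewrite eqr_int (inj_eq (mulfI (lt0r_neq0 x_gt0))) => /eqP ->; rewrite addrK.
Qed.

Lemma orb_quid_quiddity f : orb_frieze p n f -> quiddity n l (orb_quid l f).
Proof.
move=> f_orb; split; first exact: orb_quid_period.
  exact: mtrace_orb_quid.
have [_ _ f_pos] := f_orb.
exact: arcs_tame_pos (orb_quid_period l f) (arcs_tame_orb_quid l p_ge2 f_orb) f_pos.
Qed.

Lemma orb_frieze_ofK f : orb_frieze p n f -> orb_frieze_of n (orb_quid l f) = f.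
Proof.
move=> f_orb; apply: functional_extensionality => t.
have t_lt := ltn_ord t.2; rewrite /orb_frieze_of -(arcs_tame_orb_quid l p_ge2 f_orb); last by lia.
by rewrite (@arcvE _ _ t.1 t.2) -?surjective_pairing // modn_small.
Qed.

Lemma orb_quid_orb_frieze_of c : quiddity n l c -> orb_quid l (orb_frieze_of n c) = c.
Proof.
move=> [hn tr _]; apply: functional_extensionality => i.
have i_E : i = ((i - 1) %% n%:Z)%Z + 1 + ((i - 1) %/ n%:Z)%Z * n%:Z.
  by rewrite addrAC (addrC ((i - 1) %% n%:Z)%Z) -divz_eq subrK.
rewrite /orb_quid; case: ltnP => [n_ge2 | n_le1].
  have r_ge0 : 0 <= ((i - 1) %% n%:Z)%Z by rewrite modz_ge0 // -lt0n.
  rewrite (arcs_tame_orb_frieze_of hn) // intrKfloor gez0_abs // frieze2.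
  by rewrite [in RHS]i_E period_mulz.
have n1 : n = 1%N by lia.
rewrite [in RHS]i_E period_mulz //.
rewrite n1 in hn tr; rewrite -tr mtraceE -[1 + 1]add0r frieze2 frieze_ii subr0 add0r.
have -> : ((i - 1) %% n%:Z)%Z = 0 by rewrite n1; exact: modz1.
by rewrite add0r.
Qed.

End OrbQuidCorrespondence.

Lemma sig_bijection (A B : Type) (P : A -> Prop) (Q : B -> Prop) (f : A -> B) (g : B -> A) :
    (forall x, P x -> Q (f x)) -> (forall y, Q y -> P (g y)) ->
    (forall x, P x -> g (f x) = x) -> (forall y, Q y -> f (g y) = y) ->
  exists phi : {x | P x} -> {y | Q y}, bijective phi.
Proof.
move=> PQ QP fK gK.
exists (fun x => exist Q (f (sval x)) (PQ _ (svalP x))).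
exists (fun y => exist P (g (sval y)) (QP _ (svalP y))).
- by case=> x Px; apply: subset_eq_compat; apply: fK.
- by case=> y Qy; apply: subset_eq_compat; apply: gK.
Qed.

Section Correspondence.
Variables (p n : nat) (l : int).
Hypotheses (pl : int_lam p l) (n_gt0 : (0 < n)%N).

Lemma frieze_patterns_quiddities :
  exists phi : {F | is_frieze_pattern (p * n) F /\ has_growth F l} -> {c | quiddity n l c},
    bijective phi.
Proof.
have p_ge2 : (2 <= p)%N by case/int_lam_bounds: pl => /andP[].
apply: (sig_bijection (f := @quid) (g := frieze_pattern_of (p * n))).
- by move=> F [F_pn growth]; exact: (quid_quiddity pl n_gt0 F_pn growth).
- move=> c c_nl; split; first exact: (frieze_pattern_of_quiddity pl n_gt0 c_nl).
  exact: (frieze_pattern_of_growth pl n_gt0 c_nl).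
- by move=> F [F_pn _]; apply: frieze_pattern_ofK.
- by move=> c _; apply: quid_frieze_pattern_of; nia.
Qed.

Lemma quiddities_orbifold_friezes :
  exists phi : {c | quiddity n l c} -> {f : orb_arc n -> R | orb_frieze p n f}, bijective phi.
Proof.
apply: (sig_bijection (f := orb_frieze_of n) (g := orb_quid l)).
- by move=> c; apply: orb_frieze_of_quiddity pl.
- exact: orb_quid_quiddity pl n_gt0.
- exact: orb_quid_orb_frieze_of pl n_gt0.
- exact: orb_frieze_ofK pl n_gt0.
Qed.

Lemma frieze_patterns_orbifold_friezes :
  exists phi : {F | is_frieze_pattern (p * n) F /\ has_growth F l} ->
               {f : orb_arc n -> R | orb_frieze p n f},
    bijective phi.
Proof.
have [phi phi_bij] := frieze_patterns_quiddities.
have [psi psi_bij] := quiddities_orbifold_friezes.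
by exists (psi \o phi); apply: bij_comp.
Qed.

End Correspondence.

Theorem corollary4p32 :
  (forall n : nat, (0 < n)%N ->
     exists phi : {F : int -> int -> int | is_frieze_pattern (2 * n)%N F /\ has_growth F 0} ->
                  {f : orb_arc n -> R | orb_frieze 2 n f},
       bijective phi)
  /\
  (forall n : nat, (0 < n)%N ->
     exists phi : {F : int -> int -> int | is_frieze_pattern (3 * n)%N F /\ has_growth F 1} ->
                  {f : orb_arc n -> R | orb_frieze 3 n f},
       bijective phi).
Proof.
by split=> n n_gt0; apply: frieze_patterns_orbifold_friezes => //; [left | right].
Qed.
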